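(* For every $F>0$ and every $v\in\mathcal U_0$, $$(E^{\rm ecc})'(Fx;v)=0,$$ where $E^{\rm ecc}(y)=\sum_{b\in\mathcal B,\ b\not\subset\Omega_c}e_b(y)+\sum_{b\in\mathcal B,\ b\subset\Omega_c}c_b(y)$.
   Context: One-dimensional setting. Fix integers $N\ge 1$, $R\ge 1$. Let $\Omega=(-N-R,N+R)$, $\Omega_c=(0,N)$, $\Omega_a=\Omega\setminus[0,N]$, $\mathcal I=\Omega\cap\mathbb Z$, $\mathcal I_a=\Omega_a\cap\mathbb Z$, $\mathcal I_D=\{i\in\mathbb Z: N\le |i|<N+R\}$. Let $\mathcal U$ be the set of real-valued functions $y$ on $\mathcal I_a\cup[0,N]$ whose restriction to $(0,N)$ lies in $W^{1,\infty}(0,N)$ (identified with its continuous representative on $[0,N]$); write $y_i=y(i)$. Let $\mathcal U_0=\{u\in\mathcal U: u_i=0 \text{ for all } i\in\mathcal I_D\}$. For $F\in\mathbb R$, $Fx$ denotes the element $y\in\mathcal U$ with $y(x)=Fx$. Let $\varphi:\mathbb R\to\mathbb R$ be continuously differentiable. A bond $(i,i+r)$ ($i\in\mathbb Z$, $r\ge1$) is the open interval from $i$ to $i+r$; $\mathcal B=\{(i,i+r): 1\le r\le R,\ i\in\mathcal I,\ i+r\in\mathcal I\}$. Exact contribution of $b=(i,i+r)$: $e_b(y)=\varphi(y_{i+r}-y_i)$. Continuum contribution: $c_b(y)=\frac1r\int_{b\cap\Omega_c}\varphi(r\,y'(x))\,dx$. For a functional $G$ on $\mathcal U$, $G'(y;v)=\frac{d}{dt}G(y+tv)\big|_{t=0}$.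 *)

From Stdlib Require Import Reals Lra Lia ZArith List ClassicalEpsilon.
Import ListNotations.
Open Scope R_scope.

(** A real-valued function on the reals represents an element y of U:
    only its values on I_a (integers) and on [0,N] matter. *)

(** Restriction to (0,N) is in W^{1,oo}(0,N), identified with its continuous
    representative on [0,N]: equivalently, Lipschitz on [0,N]. *)
Definition lip_on (a b : R) (y : R -> R) : Prop :=
  exists L : R, forall x z, a <= x <= b -> a <= z <= b ->
    Rabs (y x - y z) <= L * Rabs (x - z).

Definition in_U (N : nat) (y : R -> R) : Prop := lip_on 0 (INR N) y.

Definition in_ID (N Rc : nat) (i : Z) : Prop :=
  (Z.of_nat N <= Z.abs i < Z.of_nat N + Z.of_nat Rc)%Z.

Definition in_U0 (N Rc : nat) (u : R -> R) : Prop :=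
  in_U N u /\ forall i : Z, in_ID N Rc i -> u (IZR i) = 0.

Definition rsum (f : R -> R) (a b : R) (n : nat) : R :=
  (b - a) / INR (S n) *
  sum_f_R0 (fun k => f (a + INR k * (b - a) / INR (S n))) n.

(** [IsDerivInt g y a b L] : L = \int_a^b g(y'(x)) dx  (Lebesgue integral, y
    Lipschitz), characterised as the limit as h -> 0+ of the Riemann integrals
    of the continuous functions x |-> g((y(x+h)-y(x))/h) over [a, b-h]
    (dominated convergence). *)
Definition IsDerivInt (g y : R -> R) (a b L : R) : Prop :=
  forall eps, 0 < eps -> exists delta, 0 < delta /\
    forall h, 0 < h < delta -> exists Lh,
      Un_cv (rsum (fun x => g ((y (x + h) - y x) / h)) a (b - h)) Lh /\
      Rabs (Lh - L) < eps.

Definition deriv_int (g y : R -> R) (a b : R) : R :=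
  epsilon (inhabits 0) (IsDerivInt g y a b).

Definition e_bond (phi : R -> R) (y : R -> R) (i : Z) (r : nat) : R :=
  phi (y (IZR (i + Z.of_nat r)) - y (IZR i)).

(** Continuum contribution of a bond b = (i,i+r) contained in Omega_c:
    c_b(y) = 1/r \int_i^{i+r} phi(r y'(x)) dx  (here b ∩ Omega_c = b). *)
Definition c_bond (phi : R -> R) (y : R -> R) (i : Z) (r : nat) : R :=
  / INR r * deriv_int (fun s => phi (INR r * s)) y (IZR i) (IZR (i + Z.of_nat r)).

(** b = (i,i+r) ⊂ Omega_c = (0,N)  iff  0 <= i and i + r <= N. *)
Definition bond_in_c (N : nat) (i : Z) (r : nat) : bool :=
  (0 <=? i)%Z && (i + Z.of_nat r <=? Z.of_nat N)%Z.

Definition Zrange (a b : Z) : list Z :=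
  map (fun k => (a + Z.of_nat k)%Z) (seq 0 (Z.to_nat (b - a))).

Definition Rlist_sum (l : list R) : R := fold_right Rplus 0 l.

(** E^ecc(y) = sum over bonds (i,i+r), 1 <= r <= R, i, i+r in I = (-N-R,N+R) ∩ Z. *)
Definition E_ecc (phi : R -> R) (N Rc : nat) (y : R -> R) : R :=
  let M := (Z.of_nat N + Z.of_nat Rc)%Z in
  Rlist_sum (map (fun i =>
    Rlist_sum (map (fun r =>
      if (i + Z.of_nat r <? M)%Z then
        (if bond_in_c N i r then c_bond phi y i r else e_bond phi y i r)
      else 0) (seq 1 Rc))) (Zrange (- M + 1) M)).

From Stdlib Require Import Reals Lra Lia ZArith List Classical ClassicalEpsilon.
From Coquelicot Require Import Coquelicot.
Open Scope R_scope.

(* Exact and continuum bonds contribute the same first variation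
   phi'(r F) (v (i + r) - v i): the former by the chain rule, the latter because the
   difference quotients of v integrated along a bond telescope to its end values.  For fixed
   r, the sum over i of v (i + r) - v i only involves the values of v on the first and the
   last r sites, which lie in I_D where v vanishes.

   The delicate point is that c_b is defined through the limit, as h -> 0+, of the
   integrals of G ((w (x + h) - w x) / h), whose existence must be established for Lipschitz
   w and continuous G.  For convex nonnegative G, Jensen's inequality bounds the integral at
   h = m k by the one at k; with the Lipschitz dependence on h this forces convergence to the
   supremum.  The functions |q - c| are such G, tents are combinations of them, and every
   continuous G is a uniform limit of tent interpolants. *)

Definition lipschitz (L : R) (f : R -> R) : Prop :=
  forall x z, Rabs (f x - f z) <= L * Rabs (x - z).

Lemma lipschitz_continuity L f : lipschitz L f -> continuity f.
Proof.
  intros Hf x eps Heps. exists (eps / (Rabs L + 1)).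
  pose proof (Rabs_pos L). split.
  - apply Rdiv_lt_0_compat; lra.
  - intros z [_ Hz]. simpl in *. unfold R_dist in *.
    pose proof (Hf z x). pose proof (Rabs_pos (z - x)).
    assert (L * Rabs (z - x) <= Rabs L * Rabs (z - x))
      by (apply Rmult_le_compat_r; [lra | apply Rle_abs]).
    assert (Rabs L * Rabs (z - x) <= Rabs L * (eps / (Rabs L + 1)))
      by (apply Rmult_le_compat_l; lra).
    assert (Rabs L * (eps / (Rabs L + 1)) < eps).
    { apply (Rmult_lt_reg_r (Rabs L + 1)); [lra |]. field_simplify; nra. }
    lra.
Qed.

Lemma lipschitz_const_nonneg L f : lipschitz L f -> 0 <= L.
Proof.
  intros Hf. pose proof (Hf 1 0) as H. pose proof (Rabs_pos (f 1 - f 0)).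
  replace (1 - 0) with 1 in H by ring. rewrite Rabs_R1 in H. lra.
Qed.

Lemma lipschitz_bound L f q B : lipschitz L f -> Rabs q <= B -> Rabs (f q) <= Rabs (f 0) + L * B.
Proof.
  intros Hf Hq. pose proof (lipschitz_const_nonneg L f Hf) as HL.
  pose proof (Hf q 0) as Hq0. rewrite Rminus_0_r in Hq0.
  pose proof (Rabs_triang_inv (f q) (f 0)).
  assert (L * Rabs q <= L * B) by (apply Rmult_le_compat_l; lra). lra.
Qed.

Lemma continuity_shift f s : continuity f -> continuity (fun x => f (x + s)).
Proof.
  intros Hf x. apply (continuity_pt_comp (fun x => x + s) f); [| apply Hf].
  apply derivable_continuous_pt. reg.
Qed.

(** * Riemann integrals of continuous functions *)

Lemma ex_RInt_continuity (f : R -> R) a b : continuity f -> ex_RInt f a b.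
Proof.
  intros Hf. apply (ex_RInt_continuous (V := R_CompleteNormedModule)).
  intros x _. apply continuity_pt_filterlim, Hf.
Qed.

Section ContinuousIntegrals.

Variables f g : R -> R.
Hypotheses (Hf : continuity f) (Hg : continuity g).

Lemma RInt_plus_cont a b : RInt (fun x => f x + g x) a b = RInt f a b + RInt g a b.
Proof. apply (RInt_plus f g a b); apply ex_RInt_continuity; assumption. Qed.

Lemma RInt_minus_cont a b : RInt (fun x => f x - g x) a b = RInt f a b - RInt g a b.
Proof. apply (RInt_minus f g a b); apply ex_RInt_continuity; assumption. Qed.

Lemma RInt_scal_cont c a b : RInt (fun x => c * f x) a b = c * RInt f a b.
Proof. apply (RInt_scal f a b c); apply ex_RInt_continuity; assumption. Qed.

Lemma RInt_Chasles_cont a b c : RInt f a b + RInt f b c = RInt f a c.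
Proof. apply (RInt_Chasles f a b c); apply ex_RInt_continuity; assumption. Qed.

Lemma RInt_le_cont a b : a <= b -> (forall x, a <= x <= b -> f x <= g x) ->
  RInt f a b <= RInt g a b.
Proof.
  intros Hab Hfg. apply RInt_le; try apply ex_RInt_continuity; auto.
  intros x Hx. apply Hfg. lra.
Qed.

Lemma abs_RInt_le_const_cont a b M : a <= b ->
  (forall x, a <= x <= b -> Rabs (f x) <= M) -> Rabs (RInt f a b) <= (b - a) * M.
Proof. intros. apply abs_RInt_le_const; auto. apply ex_RInt_continuity; assumption. Qed.

Lemma RInt_shift_cont s a b : RInt (fun x => f (x + s)) a b = RInt f (a + s) (b + s).
Proof.
  replace (a + s) with (1 * a + s) by ring. replace (b + s) with (1 * b + s) by ring.
  rewrite <- (RInt_comp_lin f 1 s a b) by (apply ex_RInt_continuity; assumption).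
  apply RInt_ext. intros x _. cbn. unfold mult; cbn. rewrite !Rmult_1_l. reflexivity.
Qed.

Lemma RInt_subinterval_le a b s t : (forall x, a <= x <= b -> 0 <= f x) ->
  a <= s -> s <= t -> t <= b -> RInt f s t <= RInt f a b.
Proof.
  intros Hpos Has Hst Htb.
  rewrite <- (RInt_Chasles_cont a s b), <- (RInt_Chasles_cont s t b).
  assert (0 <= RInt f a s)
    by (apply RInt_ge_0; [lra | apply ex_RInt_continuity; auto | intros; apply Hpos; lra]).
  assert (0 <= RInt f t b)
    by (apply RInt_ge_0; [lra | apply ex_RInt_continuity; auto | intros; apply Hpos; lra]).
  lra.
Qed.

End ContinuousIntegrals.

Lemma RInt_sum_Chasles f c d m : continuity f ->
  sum_f_R0 (fun k => RInt f (c + INR k * d) (c + INR (S k) * d)) m = RInt f c (c + INR (S m) * d).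
Proof.
  intros Hf. induction m as [| m IH].
  - simpl. f_equal. ring.
  - rewrite tech5, IH. apply RInt_Chasles_cont; assumption.
Qed.

Lemma RInt_rectangle_error f x0 dn e : continuity f -> 0 <= dn ->
  (forall x, x0 <= x <= x0 + dn -> Rabs (f x - f x0) <= e) ->
  Rabs (RInt f x0 (x0 + dn) - dn * f x0) <= dn * e.
Proof.
  intros Hf Hdn Hb.
  assert (Hc : continuity (fun _ : R => f x0)) by (intros ? ; apply continuity_pt_const; intros ? ?; auto).
  replace (dn * f x0) with (RInt (fun _ => f x0) x0 (x0 + dn))
    by (rewrite RInt_const; unfold scal; simpl; unfold mult; simpl; ring).
  rewrite <- (RInt_minus_cont f (fun _ => f x0) Hf Hc).
  replace (dn * e) with ((x0 + dn - x0) * e) by ring.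
  apply abs_RInt_le_const_cont; [| lra | exact Hb].
  apply continuity_minus; assumption.
Qed.


Lemma rsum_RInt_dist f c d n e : c <= d -> continuity f ->
  (forall x z, c <= x <= d -> c <= z <= d -> Rabs (x - z) <= (d - c) / INR (S n) ->
     Rabs (f x - f z) <= e) ->
  Rabs (RInt f c d - rsum f c d n) <= (d - c) * e.
Proof.
  intros Hcd Hf Hmod.
  set (dn := (d - c) / INR (S n)).
  assert (HSn : 0 < INR (S n)) by (apply lt_0_INR; lia).
  assert (Hdn : 0 <= dn) by (unfold dn; apply Rdiv_le_0_compat; lra).
  assert (Hend : c + INR (S n) * dn = d) by (unfold dn; field; lra).
  assert (HR : RInt f c d = sum_f_R0 (fun k => RInt f (c + INR k * dn) (c + INR (S k) * dn)) n)
    by (rewrite RInt_sum_Chasles, Hend by assumption; reflexivity).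
  assert (HS : rsum f c d n = sum_f_R0 (fun k => dn * f (c + INR k * dn)) n).
  { unfold rsum. fold dn. rewrite scal_sum. apply sum_eq. intros k _.
    rewrite Rmult_comm. do 2 f_equal. unfold dn. field. lra. }
  rewrite HR, HS, <- minus_sum.
  eapply Rle_trans; [apply sum_f_R0_triangle |].
  apply Rle_trans with (sum_f_R0 (fun _ => dn * e) n).
  - apply sum_Rle. intros k Hk.
    assert (INR k <= INR n) by (apply le_INR; lia).
    assert (c <= c + INR k * dn) by (pose proof (pos_INR k); nra).
    assert (HSk : c + INR (S k) * dn = c + INR k * dn + dn) by (rewrite S_INR; ring).
    assert (c + INR (S k) * dn <= d).
    { rewrite <- Hend. apply Rplus_le_compat_l, Rmult_le_compat_r; auto. apply le_INR; lia. }
    rewrite HSk in *. apply RInt_rectangle_error; auto.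
    intros x Hx. apply Hmod; try lra. fold dn. rewrite Rabs_right; lra.
  - rewrite sum_cte. right. unfold dn. field. lra.
Qed.

Lemma rsum_cv f c d : c <= d -> continuity f -> Un_cv (rsum f c d) (RInt f c d).
Proof.
  intros Hcd Hf eps Heps.
  set (e := eps / (d - c + 1)).
  assert (He : 0 < e) by (unfold e; apply Rdiv_lt_0_compat; lra).
  destruct (Heine f (fun x => c <= x <= d) (compact_P3 c d) (fun x _ => Hf x) (mkposreal e He))
    as [[del Hdel] Hunif]; simpl in Hunif.
  destruct (archimed ((d - c) / del)) as [Hup _].
  assert (0 <= (d - c) / del) by (apply Rdiv_le_0_compat; lra).
  exists (Z.to_nat (up ((d - c) / del))). intros n Hn. unfold R_dist.
  assert (HSn : 0 < INR (S n)) by (apply lt_0_INR; lia).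
  assert (Hmesh : (d - c) / INR (S n) < del).
  { assert (IZR (up ((d - c) / del)) <= INR n).
    { rewrite INR_IZR_INZ. apply IZR_le. assert (0 <= up ((d - c) / del))%Z by (apply le_IZR; lra). lia. }
    assert (d - c < del * INR (S n)).
    { replace (d - c) with ((d - c) / del * del) by (field; lra). rewrite S_INR. nra. }
    apply (Rmult_lt_reg_r (INR (S n))); auto. unfold Rdiv. rewrite Rmult_assoc, Rinv_l, Rmult_1_r by lra. lra. }
  rewrite <- Rabs_Ropp, Ropp_minus_distr.
  eapply Rle_lt_trans; [apply (rsum_RInt_dist f c d n e); auto |].
  - intros x z Hx Hz Hxz. left. apply Hunif; auto. lra.
  - unfold e. apply (Rmult_lt_reg_r (d - c + 1)); [lra |]. field_simplify; lra.
Qed.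

(** * Limits as h -> 0+ *)

Definition cv_right0 (P : R -> R) (l : R) : Prop :=
  forall eps, 0 < eps -> exists del, 0 < del /\ forall h, 0 < h < del -> Rabs (P h - l) < eps.

Lemma cv_right0_ext P P' l : (forall h, 0 < h -> P h = P' h) -> cv_right0 P l -> cv_right0 P' l.
Proof.
  intros E H eps Heps. destruct (H eps Heps) as [d [Hd H']]. exists d; split; auto.
  intros h Hh. rewrite <- E by lra. auto.
Qed.

Lemma cv_right0_lin P1 P2 l1 l2 al be : cv_right0 P1 l1 -> cv_right0 P2 l2 ->
  cv_right0 (fun h => al * P1 h + be * P2 h) (al * l1 + be * l2).
Proof.
  intros H1 H2 eps Heps.
  pose proof (Rabs_pos al). pose proof (Rabs_pos be).
  set (e := eps / (Rabs al + Rabs be + 1)).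
  assert (He : 0 < e) by (unfold e; apply Rdiv_lt_0_compat; lra).
  destruct (H1 e He) as [d1 [Hd1 H1']]. destruct (H2 e He) as [d2 [Hd2 H2']].
  exists (Rmin d1 d2). split; [apply Rmin_glb_lt; auto |].
  intros h Hh. pose proof (Rmin_l d1 d2). pose proof (Rmin_r d1 d2).
  replace (al * P1 h + be * P2 h - (al * l1 + be * l2)) with (al * (P1 h - l1) + be * (P2 h - l2)) by ring.
  eapply Rle_lt_trans; [apply Rabs_triang |]. rewrite !Rabs_mult.
  assert (Rabs al * Rabs (P1 h - l1) <= Rabs al * e) by (apply Rmult_le_compat_l; [lra | left; apply H1'; lra]).
  assert (Rabs be * Rabs (P2 h - l2) <= Rabs be * e) by (apply Rmult_le_compat_l; [lra | left; apply H2'; lra]).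
  assert ((Rabs al + Rabs be) * e < eps).
  { unfold e. apply (Rmult_lt_reg_r (Rabs al + Rabs be + 1)); [lra |]. field_simplify; nra. }
  lra.
Qed.

Lemma cv_right0_abs_le P l E d0 : 0 < d0 -> cv_right0 P l ->
  (forall h, 0 < h < d0 -> Rabs (P h) <= E) -> Rabs l <= E.
Proof.
  intros Hd0 HP HE. apply Rle_plus_epsilon. intros eta Heta.
  destruct (HP eta Heta) as [d [Hd Hcv]].
  set (h := Rmin d d0 / 2).
  pose proof (Rmin_l d d0). pose proof (Rmin_r d d0). pose proof (Rmin_glb_lt d d0 0 Hd Hd0).
  assert (A := Hcv h ltac:(unfold h; lra)). assert (B := HE h ltac:(unfold h; lra)).
  pose proof (Rabs_triang_inv l (P h)). rewrite <- Rabs_Ropp, Ropp_minus_distr in A. lra.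
Qed.

Lemma IsDerivInt_unique g y a b L1 L2 : IsDerivInt g y a b L1 -> IsDerivInt g y a b L2 -> L1 = L2.
Proof.
  intros H1 H2. destruct (Req_dec L1 L2) as [| Hne]; auto.
  set (e := Rabs (L1 - L2) / 3).
  assert (He : 0 < e) by (unfold e; apply Rdiv_lt_0_compat; [apply Rabs_pos_lt; lra | lra]).
  destruct (H1 e He) as [d1 [Hd1 H1']]. destruct (H2 e He) as [d2 [Hd2 H2']].
  set (h := Rmin d1 d2 / 2).
  pose proof (Rmin_l d1 d2). pose proof (Rmin_r d1 d2). pose proof (Rmin_glb_lt d1 d2 0 Hd1 Hd2).
  destruct (H1' h ltac:(unfold h; lra)) as [M1 [C1 B1]].
  destruct (H2' h ltac:(unfold h; lra)) as [M2 [C2 B2]].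
  rewrite (UL_sequence _ _ _ C1 C2) in B1.
  assert (Rabs (L1 - L2) <= Rabs (M2 - L1) + Rabs (M2 - L2)).
  { replace (L1 - L2) with (- (M2 - L1) + (M2 - L2)) by ring.
    eapply Rle_trans; [apply Rabs_triang |]. rewrite Rabs_Ropp. lra. }
  unfold e in *. lra.
Qed.

Lemma deriv_int_eq g y a b L : IsDerivInt g y a b L -> deriv_int g y a b = L.
Proof.
  intros H. apply (IsDerivInt_unique g y a b); auto.
  unfold deriv_int. apply epsilon_spec. exists L; exact H.
Qed.

Lemma rsum_ext f f' c d n : c <= d -> (forall x, c <= x <= d -> f x = f' x) ->
  rsum f c d n = rsum f' c d n.
Proof.
  intros Hcd H. unfold rsum. f_equal. apply sum_eq. intros k Hk. apply H.
  assert (0 < INR (S n)) by (apply lt_0_INR; lia).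
  assert (INR k <= INR (S n)) by (apply le_INR; lia).
  pose proof (pos_INR k).
  assert (0 <= INR k * (d - c) / INR (S n)) by (apply Rdiv_le_0_compat; [nra | lra]).
  assert (INR k * (d - c) / INR (S n) <= d - c)
    by (apply (Rmult_le_reg_r (INR (S n))); auto; field_simplify; nra).
  lra.
Qed.

Lemma IsDerivInt_cv_right0 g y yt a b L : a < b -> (forall x, a <= x <= b -> y x = yt x) ->
  continuity g -> continuity yt ->
  cv_right0 (fun h => RInt (fun x => g ((yt (x + h) - yt x) / h)) a (b - h)) L ->
  IsDerivInt g y a b L.
Proof.
  intros Hab Hy Hg Hyt HL eps Heps.
  destruct (HL eps Heps) as [del [Hdel H]].
  exists (Rmin del (b - a)). split; [apply Rmin_glb_lt; lra |].
  intros h Hh. pose proof (Rmin_l del (b - a)). pose proof (Rmin_r del (b - a)).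
  exists (RInt (fun x => g ((yt (x + h) - yt x) / h)) a (b - h)). split; [| apply H; lra].
  assert (Hc : continuity (fun x => g ((yt (x + h) - yt x) / h))).
  { intros x. apply (continuity_pt_comp (fun x => (yt (x + h) - yt x) / h) g); [| apply Hg].
    apply continuity_pt_div; [| apply continuity_pt_const; intros ? ?; auto | lra].
    apply continuity_pt_minus; [apply (continuity_shift yt h) | apply Hyt]; exact Hyt. }
  intros e He. destruct (rsum_cv _ a (b - h) ltac:(lra) Hc e He) as [N0 HN0].
  exists N0. intros n Hn. rewrite (rsum_ext _ (fun x => g ((yt (x + h) - yt x) / h))); [apply HN0; auto | lra |].
  intros x Hx. rewrite !Hy; auto; lra.
Qed.

Definition cauchy_right0 (P : R -> R) : Prop :=
  forall eps, 0 < eps -> exists del, 0 < del /\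
    forall h k, 0 < h < del -> 0 < k < del -> Rabs (P h - P k) < eps.

Lemma cv_right0_cauchy P l : cv_right0 P l -> cauchy_right0 P.
Proof.
  intros H eps Heps. destruct (H (eps / 2)) as [d [Hd H']]; [lra |].
  exists d. split; auto. intros h k Hh Hk.
  replace (P h - P k) with ((P h - l) - (P k - l)) by ring.
  eapply Rle_lt_trans; [apply Rabs_triang |]. rewrite Rabs_Ropp.
  pose proof (H' h Hh). pose proof (H' k Hk). lra.
Qed.

Lemma inv_succ_eventually_lt d : 0 < d -> exists N, forall n, (N <= n)%nat -> 0 < / (INR n + 1) < d.
Proof.
  intros Hd. destruct (archimed (/ d)) as [H1 _].
  exists (Z.to_nat (up (/ d))). intros n Hn.
  assert (0 < / d) by (apply Rinv_0_lt_compat; lra).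
  assert (IZR (up (/ d)) <= INR n).
  { rewrite INR_IZR_INZ. apply IZR_le. assert (0 <= up (/ d))%Z by (apply le_IZR; lra). lia. }
  pose proof (pos_INR n).
  split; [apply Rinv_0_lt_compat; lra |].
  replace d with (/ / d) by (field; lra). apply Rinv_lt_contravar; nra.
Qed.

Lemma cauchy_right0_cv P : cauchy_right0 P -> exists l, cv_right0 P l.
Proof.
  intros H.
  set (u := fun n : nat => P (/ (INR n + 1))).
  assert (Hc : Cauchy_crit u).
  { intros eps Heps. destruct (H eps Heps) as [d [Hd H']]. destruct (inv_succ_eventually_lt d Hd) as [N HN].
    exists N. intros n m Hn Hm. apply H'; auto. }
  destruct (Rcomplete.R_complete u Hc) as [l Hl]. exists l.
  intros eps Heps. destruct (H (eps / 2)) as [d [Hd H']]; [lra |].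
  exists d. split; auto. intros h Hh.
  destruct (Hl (eps / 2)) as [N1 HN1]; [lra |].
  destruct (inv_succ_eventually_lt d Hd) as [N2 HN2].
  assert (A1 := HN1 (N1 + N2)%nat ltac:(lia)). unfold R_dist in A1.
  assert (A2 : Rabs (P h - u (N1 + N2)%nat) < eps / 2) by (apply H'; auto; apply HN2; lia).
  replace (P h - l) with ((P h - u (N1 + N2)%nat) + (u (N1 + N2)%nat - l)) by ring.
  eapply Rle_lt_trans; [apply Rabs_triang | lra].
Qed.

Lemma cauchy_right0_ext P P' : (forall h, 0 < h -> P h = P' h) -> cauchy_right0 P -> cauchy_right0 P'.
Proof.
  intros E H eps Heps. destruct (H eps Heps) as [d [Hd H']]. exists d; split; auto.
  intros h k Hh Hk. rewrite <- !E by lra. auto.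
Qed.

Lemma cauchy_right0_lin P1 P2 al be : cauchy_right0 P1 -> cauchy_right0 P2 ->
  cauchy_right0 (fun h => al * P1 h + be * P2 h).
Proof.
  intros H1 H2 eps Heps.
  pose proof (Rabs_pos al). pose proof (Rabs_pos be).
  set (e := eps / (2 * (Rabs al + Rabs be + 1))).
  assert (He : 0 < e) by (unfold e; apply Rdiv_lt_0_compat; lra).
  destruct (H1 e He) as [d1 [Hd1 H1']]. destruct (H2 e He) as [d2 [Hd2 H2']].
  exists (Rmin d1 d2). split; [apply Rmin_glb_lt; auto |].
  intros h k Hh Hk. pose proof (Rmin_l d1 d2). pose proof (Rmin_r d1 d2).
  replace (al * P1 h + be * P2 h - (al * P1 k + be * P2 k))
    with (al * (P1 h - P1 k) + be * (P2 h - P2 k)) by ring.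
  eapply Rle_lt_trans; [apply Rabs_triang |]. rewrite !Rabs_mult.
  assert (Rabs al * Rabs (P1 h - P1 k) <= Rabs al * e)
    by (apply Rmult_le_compat_l; [lra | left; apply H1'; lra]).
  assert (Rabs be * Rabs (P2 h - P2 k) <= Rabs be * e)
    by (apply Rmult_le_compat_l; [lra | left; apply H2'; lra]).
  assert ((Rabs al + Rabs be) * e < eps).
  { unfold e. apply (Rmult_lt_reg_r (2 * (Rabs al + Rabs be + 1))); [lra |]. field_simplify; nra. }
  lra.
Qed.

Lemma derivable_pt_lim_remainder f x0 l e : derivable_pt_lim f x0 l -> 0 < e ->
  exists del, 0 < del /\ forall u, Rabs u < del -> Rabs (f (x0 + u) - f x0 - l * u) <= e * Rabs u.
Proof.
  intros Hf He. destruct (Hf e He) as [[d Hd] Hfd]. simpl in Hfd.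
  exists d. split; auto. intros u Hu.
  destruct (Req_dec u 0) as [-> | Hu0].
  - rewrite Rplus_0_r, Rmult_0_r, Rabs_R0. replace (f x0 - f x0 - 0) with 0 by ring.
    rewrite Rabs_R0. lra.
  - specialize (Hfd u Hu0 Hu).
    replace (f (x0 + u) - f x0 - l * u) with (((f (x0 + u) - f x0) / u - l) * u) by (field; auto).
    rewrite Rabs_mult. apply Rmult_le_compat_r; [apply Rabs_pos | lra].
Qed.

(** * Uniform approximation by tents *)

(* The tent of height 1 supported on [-d, d], written through [Rabs] so that it is a linear
   combination of convex functions. *)
Definition hat (d x : R) : R := (Rabs (x + d) - 2 * Rabs x + Rabs (x - d)) / (2 * d).

Lemma hat_nonneg d x : 0 < d -> 0 <= hat d x.
Proof.
  intros Hd. unfold hat. apply Rdiv_le_0_compat; [| lra].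
  unfold Rabs; repeat destruct Rcase_abs; lra.
Qed.

Lemma hat_zero d x : 0 < d -> d <= Rabs x -> hat d x = 0.
Proof.
  intros Hd. unfold hat, Rabs. repeat destruct Rcase_abs; intros; try lra;
    match goal with |- ?A / ?B = 0 => replace A with 0 by lra; field; lra end.
Qed.

Lemma sum_second_difference (g : R -> R) n :
  sum_f_R0 (fun j => g (INR j + 1) - 2 * g (INR j) + g (INR j - 1)) n
  = (g (INR n + 1) - g (INR n)) - (g 0 - g (-1)).
Proof.
  induction n as [| n IH].
  - simpl. replace (0 + 1) with 1 by ring. replace (0 - 1) with (-1) by ring. ring.
  - rewrite tech5, IH, S_INR. replace (INR n + 1 - 1) with (INR n) by ring. ring.
Qed.

Lemma hat_partition_unity K d n q : 0 < d -> INR (S n) * d = 2 * K -> -K <= q <= K ->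
  sum_f_R0 (fun j => hat d (q - (-K + INR j * d))) (S n) = 1.
Proof.
  intros Hd HK Hq.
  set (g := fun s => Rabs (q + K - s * d)).
  transitivity (/ (2 * d) * sum_f_R0 (fun j => g (INR j + 1) - 2 * g (INR j) + g (INR j - 1)) (S n)).
  - rewrite scal_sum. apply sum_eq. intros j _. unfold hat, g.
    replace (q - (-K + INR j * d) + d) with (q + K - (INR j - 1) * d) by ring.
    replace (q - (-K + INR j * d) - d) with (q + K - (INR j + 1) * d) by ring.
    replace (q - (-K + INR j * d)) with (q + K - INR j * d) by ring.
    field. lra.
  - rewrite sum_second_difference. unfold g.
    rewrite (Rabs_left1 (q + K - (INR (S n) + 1) * d)) by nra.
    rewrite (Rabs_left1 (q + K - INR (S n) * d)) by nra.
    rewrite Rmult_0_l, Rminus_0_r, (Rabs_right (q + K)) by lra.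
    rewrite (Rabs_right (q + K - -1 * d)) by lra.
    field. lra.
Qed.

Definition hat_interpolant (G : R -> R) (K d : R) (n : nat) (q : R) : R :=
  sum_f_R0 (fun j => G (-K + INR j * d) * hat d (q - (-K + INR j * d))) (S n).

Lemma hat_interpolation G K eps : continuity G -> 0 < K -> 0 < eps ->
  exists d n, 0 < d /\ forall q, -K <= q <= K -> Rabs (G q - hat_interpolant G K d n q) <= eps.
Proof.
  intros HG HK Heps.
  destruct (Heine G (fun x => -K <= x <= K) (compact_P3 (-K) K) (fun x _ => HG x) (mkposreal eps Heps))
    as [[d0 Hd0] Hunif]; simpl in Hunif.
  destruct (inv_succ_eventually_lt (d0 / (2 * K))) as [n Hn]; [apply Rdiv_lt_0_compat; lra |].
  specialize (Hn n (le_n n)).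
  pose proof (pos_INR n).
  set (d := 2 * K / (INR n + 1)).
  assert (Hd : 0 < d) by (unfold d; apply Rdiv_lt_0_compat; lra).
  assert (Hdd : d < d0).
  { unfold d. apply (Rmult_lt_reg_l (/ (2 * K))); [apply Rinv_0_lt_compat; lra |].
    replace (/ (2 * K) * (2 * K / (INR n + 1))) with (/ (INR n + 1)) by (field; lra).
    replace (/ (2 * K) * d0) with (d0 / (2 * K)) by (field; lra). lra. }
  assert (HKd : INR (S n) * d = 2 * K) by (rewrite S_INR; unfold d; field; lra).
  exists d, n. split; [exact Hd |]. intros q Hq.
  assert (Hunit := hat_partition_unity K d n q Hd HKd Hq).
  unfold hat_interpolant.
  replace (G q - sum_f_R0 (fun j => G (-K + INR j * d) * hat d (q - (-K + INR j * d))) (S n))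
    with (sum_f_R0 (fun j => (G q - G (-K + INR j * d)) * hat d (q - (-K + INR j * d))) (S n)).
  2:{ transitivity (G q * sum_f_R0 (fun j => hat d (q - (-K + INR j * d))) (S n)
                    - sum_f_R0 (fun j => G (-K + INR j * d) * hat d (q - (-K + INR j * d))) (S n)).
      - rewrite scal_sum, <- minus_sum. apply sum_eq. intros; ring.
      - rewrite Hunit. ring. }
  eapply Rle_trans; [apply sum_f_R0_triangle |].
  apply Rle_trans with (sum_f_R0 (fun j => hat d (q - (-K + INR j * d)) * eps) (S n)).
  - apply sum_Rle. intros j Hj.
    rewrite Rabs_mult, (Rabs_right (hat _ _)) by (apply Rle_ge, hat_nonneg; lra).
    destruct (Rle_lt_dec d (Rabs (q - (-K + INR j * d)))) as [Hfar | Hnear].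
    + rewrite hat_zero by lra. lra.
    + rewrite Rmult_comm. apply Rmult_le_compat_l; [apply hat_nonneg; lra |].
      left. apply Hunif; auto; [| lra].
      assert (INR j <= INR (S n)) by (apply le_INR; lia). pose proof (pos_INR j). nra.
  - rewrite <- scal_sum, Hunit. lra.
Qed.

(** * Integrals of difference quotients *)

Definition dq (w : R -> R) (h x : R) : R := (w (x + h) - w x) / h.

Definition dq_integral (w : R -> R) (a b : R) (G : R -> R) (h : R) : R :=
  RInt (fun x => G (dq w h x)) a (b - h).

Lemma dq_split w h k x : 0 < h -> 0 < k ->
  dq w (h + k) x = h / (h + k) * dq w h x + k / (h + k) * dq w k (x + h).
Proof. intros. unfold dq. replace (x + h + k) with (x + (h + k)) by ring. field. lra. Qed.

Definition convex (G : R -> R) : Prop :=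
  forall l p q, 0 <= l <= 1 -> G (l * p + (1 - l) * q) <= l * G p + (1 - l) * G q.

Section DifferenceQuotients.

Variables (w : R -> R) (Lw : R).
Hypothesis Hw : lipschitz Lw w.

Let HLw : 0 <= Lw := lipschitz_const_nonneg Lw w Hw.

Lemma dq_bound h x : 0 < h -> Rabs (dq w h x) <= Lw.
Proof.
  intros Hh. unfold dq. rewrite Rabs_div, (Rabs_right h) by lra.
  apply (Rmult_le_reg_r h); auto. unfold Rdiv. rewrite Rmult_assoc, Rinv_l, Rmult_1_r by lra.
  replace (Lw * h) with (Lw * Rabs (x + h - x)) by (replace (x + h - x) with h by ring; rewrite Rabs_right; lra).
  apply Hw.
Qed.

Lemma dq_lipschitz h : 0 < h -> lipschitz (2 * Lw / h) (dq w h).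
Proof.
  intros Hh x z. unfold dq.
  replace ((w (x + h) - w x) / h - (w (z + h) - w z) / h)
    with (((w (x + h) - w (z + h)) - (w x - w z)) / h) by (field; lra).
  rewrite Rabs_div, (Rabs_right h) by lra.
  apply (Rmult_le_reg_r h); auto.
  replace (Rabs (w (x + h) - w (z + h) - (w x - w z)) / h * h)
    with (Rabs (w (x + h) - w (z + h) - (w x - w z))) by (field; lra).
  replace (2 * Lw / h * Rabs (x - z) * h) with (Lw * Rabs (x + h - (z + h)) + Lw * Rabs (x - z))
    by (replace (x + h - (z + h)) with (x - z) by ring; field; lra).
  eapply Rle_trans; [apply Rabs_triang |]. rewrite Rabs_Ropp. apply Rplus_le_compat; apply Hw.
Qed.

Lemma dq_comp_continuity G h : 0 < h -> continuity G -> continuity (fun x => G (dq w h x)).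
Proof.
  intros Hh HG x. apply (continuity_pt_comp (dq w h) G); [| apply HG].
  apply (lipschitz_continuity (2 * Lw / h)), dq_lipschitz, Hh.
Qed.

Lemma dq_diff_bound h h' x : 0 < h -> h <= h' -> Rabs (dq w h x - dq w h' x) <= 2 * Lw * (h' - h) / h.
Proof.
  intros Hh Hhh.
  set (A := w (x + h) - w x). set (B := w (x + h') - w (x + h)).
  assert (E : h * h' * (dq w h x - dq w h' x) = (h' - h) * A - h * B) by (unfold dq, A, B; field; lra).
  assert (HA : Rabs A <= Lw * h).
  { unfold A. replace h with (Rabs (x + h - x)) at 2
      by (replace (x + h - x) with h by ring; apply Rabs_right; lra). apply Hw. }
  assert (HB : Rabs B <= Lw * (h' - h)).
  { unfold B. replace (h' - h) with (Rabs (x + h' - (x + h)))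
      by (replace (x + h' - (x + h)) with (h' - h) by ring; apply Rabs_right; lra). apply Hw. }
  assert (H2 : Rabs ((h' - h) * A - h * B) <= 2 * Lw * h * (h' - h)).
  { eapply Rle_trans; [apply Rabs_triang |].
    rewrite Rabs_Ropp, !Rabs_mult, (Rabs_right (h' - h)), (Rabs_right h) by lra. nra. }
  rewrite <- E, Rabs_mult, (Rabs_right (h * h')) in H2 by nra.
  apply (Rmult_le_reg_l (h * h')); [nra |].
  replace (h * h' * (2 * Lw * (h' - h) / h)) with (2 * Lw * h' * (h' - h)) by (field; lra).
  assert (0 <= 2 * Lw * (h' - h)) by nra. nra.
Qed.

Variables a b : R.
Hypothesis Hab : a < b.

Lemma dq_integral_bound G M h : continuity G -> 0 < h < b - a ->
  (forall q, Rabs q <= Lw -> Rabs (G q) <= M) -> Rabs (dq_integral w a b G h) <= (b - a) * M.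
Proof.
  intros HG Hh HM.
  assert (0 <= M) by (pose proof (HM 0 ltac:(rewrite Rabs_R0; lra)); pose proof (Rabs_pos (G 0)); lra).
  eapply Rle_trans.
  - apply abs_RInt_le_const_cont; [apply dq_comp_continuity; auto; lra | lra |].
    intros x _. apply HM, dq_bound. lra.
  - apply Rmult_le_compat_r; lra.
Qed.

Lemma dq_integral_dist G G' h e : continuity G -> continuity G' -> 0 < h < b - a ->
  (forall q, Rabs q <= Lw -> Rabs (G q - G' q) <= e) ->
  Rabs (dq_integral w a b G h - dq_integral w a b G' h) <= (b - a) * e.
Proof.
  intros HG HG' Hh Hclose. unfold dq_integral.
  rewrite <- RInt_minus_cont by (apply dq_comp_continuity; auto; lra).
  apply (dq_integral_bound (fun q => G q - G' q)); auto. apply continuity_minus; assumption.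
Qed.

Lemma dq_integral_lin G1 G2 al be h : continuity G1 -> continuity G2 -> 0 < h ->
  dq_integral w a b (fun q => al * G1 q + be * G2 q) h
  = al * dq_integral w a b G1 h + be * dq_integral w a b G2 h.
Proof.
  intros C1 C2 Hh. unfold dq_integral.
  rewrite RInt_plus_cont by (apply continuity_scal, dq_comp_continuity; auto).
  rewrite !RInt_scal_cont by (apply dq_comp_continuity; auto). reflexivity.
Qed.

Section ConvexIntegrands.

Variable G : R -> R.
Hypotheses (HG : continuity G) (HGpos : forall q, 0 <= G q) (HGconv : convex G).

Lemma dq_integral_add_le h k : 0 < h -> 0 < k -> h + k < b - a ->
  dq_integral w a b G (h + k)
  <= h / (h + k) * dq_integral w a b G h + k / (h + k) * dq_integral w a b G k.
Proof.
  intros Hh Hk Hhk.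
  assert (Ch := dq_comp_continuity G h Hh HG).
  assert (Ck := dq_comp_continuity G k Hk HG).
  assert (Cks := continuity_shift (fun y => G (dq w k y)) h Ck). simpl in Cks.
  assert (0 <= h / (h + k)) by (apply Rdiv_le_0_compat; lra).
  assert (0 <= k / (h + k)) by (apply Rdiv_le_0_compat; lra).
  unfold dq_integral at 1.
  eapply Rle_trans.
  { apply (RInt_le_cont _ (fun x => h / (h + k) * G (dq w h x) + k / (h + k) * G (dq w k (x + h)))).
    - apply dq_comp_continuity; [lra | exact HG].
    - apply continuity_plus; apply continuity_scal; assumption.
    - lra.
    - intros x _. rewrite dq_split by assumption.
      replace (k / (h + k)) with (1 - h / (h + k)) by (field; lra).
      apply HGconv. split; [assumption |].
      apply (Rmult_le_reg_r (h + k)); [lra |]. field_simplify; lra. }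
  rewrite RInt_plus_cont by (apply continuity_scal; assumption).
  rewrite !RInt_scal_cont by assumption.
  rewrite (RInt_shift_cont (fun y => G (dq w k y))) by exact Ck.
  apply Rplus_le_compat; apply Rmult_le_compat_l; auto; unfold dq_integral;
    apply RInt_subinterval_le; auto; lra.
Qed.

Lemma dq_integral_multiple_le m k : 0 < k -> INR (S m) * k < b - a ->
  dq_integral w a b G (INR (S m) * k) <= dq_integral w a b G k.
Proof.
  induction m as [| m IH]; intros Hk Hm.
  - simpl. rewrite Rmult_1_l. lra.
  - set (h := INR (S m) * k).
    assert (Hh : 0 < h) by (unfold h; apply Rmult_lt_0_compat; auto; apply lt_0_INR; lia).
    replace (INR (S (S m)) * k) with (h + k) in * by (unfold h; rewrite (S_INR (S m)); ring).
    specialize (IH Hk). fold h in IH. specialize (IH ltac:(lra)).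
    eapply Rle_trans; [apply dq_integral_add_le; auto; lra |].
    apply Rle_trans with (h / (h + k) * dq_integral w a b G k + k / (h + k) * dq_integral w a b G k).
    + apply Rplus_le_compat_r, Rmult_le_compat_l; [apply Rdiv_le_0_compat; lra | exact IH].
    + right. field. lra.
Qed.

Variable LG : R.
Hypothesis HLG : lipschitz LG G.

Let shift_const (h : R) : R := Rabs (G 0) + LG * Lw + (b - a) * LG * (2 * Lw / h).

Lemma shift_const_nonneg h : 0 < h -> 0 <= shift_const h.
Proof.
  intros Hh. pose proof (lipschitz_const_nonneg LG G HLG). pose proof (Rabs_pos (G 0)).
  assert (0 <= (b - a) * LG * (2 * Lw / h))
    by (apply Rmult_le_pos; [apply Rmult_le_pos; lra | apply Rdiv_le_0_compat; lra]).
  unfold shift_const. nra.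
Qed.

Lemma dq_integral_shift_le h h' : 0 < h -> h <= h' -> h' < b - a ->
  dq_integral w a b G h - shift_const h * (h' - h) <= dq_integral w a b G h'.
Proof.
  intros Hh Hhh Hh'.
  pose proof (lipschitz_const_nonneg LG G HLG).
  assert (C := dq_comp_continuity G h Hh HG).
  assert (C' := dq_comp_continuity G h' ltac:(lra) HG).
  unfold dq_integral. rewrite <- (RInt_Chasles_cont _ C a (b - h') (b - h)).
  assert (B1 : Rabs (RInt (fun x => G (dq w h x)) (b - h') (b - h)) <= (b - h - (b - h')) * (Rabs (G 0) + LG * Lw)).
  { apply abs_RInt_le_const_cont; auto; [lra |]. intros x _.
    apply lipschitz_bound; auto. apply dq_bound. lra. }
  assert (B2 : Rabs (RInt (fun x => G (dq w h x) - G (dq w h' x)) a (b - h'))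
              <= (b - h' - a) * (LG * (2 * Lw * (h' - h) / h))).
  { apply abs_RInt_le_const_cont; [apply continuity_minus; auto | lra |].
    intros x _. eapply Rle_trans; [apply HLG |]. apply Rmult_le_compat_l; auto. apply dq_diff_bound; auto. }
  rewrite RInt_minus_cont in B2 by auto.
  assert (0 <= LG * (2 * Lw * (h' - h) / h)) by (apply Rmult_le_pos; auto; apply Rdiv_le_0_compat; nra).
  assert ((b - h' - a) * (LG * (2 * Lw * (h' - h) / h)) <= (b - a) * LG * (2 * Lw / h) * (h' - h)).
  { replace ((b - a) * LG * (2 * Lw / h) * (h' - h)) with ((b - a) * (LG * (2 * Lw * (h' - h) / h)))
      by (field; lra).
    apply Rmult_le_compat_r; lra. }
  apply Rabs_le_between in B1. apply Rabs_le_between in B2. unfold shift_const. nra.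
Qed.

(* Jensen makes [dq_integral] decrease along multiples [k, 2k, ...]; the Lipschitz bound of
   [dq_integral_shift_le] interpolates between consecutive multiples. *)
Lemma dq_integral_almost_decreasing h k : 0 < h -> 0 < k -> h + k < b - a ->
  dq_integral w a b G h - shift_const h * k <= dq_integral w a b G k.
Proof.
  intros Hh Hk Hhk.
  assert (HK := shift_const_nonneg h Hh).
  destruct (archimed (h / k)) as [Hz1 Hz2].
  set (z := up (h / k)) in *.
  assert (0 < h / k) by (apply Rdiv_lt_0_compat; lra).
  assert (Hz : (1 <= z)%Z) by (assert (Hz0 : IZR 0 < IZR z) by (simpl; lra); apply lt_IZR in Hz0; lia).
  assert (Hm : INR (S (Z.to_nat z - 1)) = IZR z).
  { replace (S (Z.to_nat z - 1)) with (Z.to_nat z) by lia. rewrite INR_IZR_INZ. f_equal. lia. }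
  assert (Hlo : h < IZR z * k).
  { apply (Rmult_lt_compat_r k) in Hz1; [| lra].
    unfold Rdiv in Hz1. rewrite Rmult_assoc, Rinv_l, Rmult_1_r in Hz1; lra. }
  assert (Hhi : IZR z * k <= h + k).
  { apply (Rmult_le_compat_r k) in Hz2; [| lra].
    unfold Rdiv in Hz2. rewrite Rmult_minus_distr_r, Rmult_assoc, Rinv_l, Rmult_1_r in Hz2; lra. }
  assert (Hmult := dq_integral_multiple_le (Z.to_nat z - 1) k Hk ltac:(rewrite Hm; lra)).
  rewrite Hm in Hmult.
  assert (Hshift := dq_integral_shift_le h (IZR z * k) Hh ltac:(lra) ltac:(lra)).
  assert (shift_const h * (IZR z * k - h) <= shift_const h * k) by (apply Rmult_le_compat_l; lra).
  lra.
Qed.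

Lemma cv_dq_integral_convex : exists l, cv_right0 (dq_integral w a b G) l.
Proof.
  set (E := fun x => exists h, 0 < h < b - a /\ x = dq_integral w a b G h).
  destruct (completeness E) as [Sup [Hub Hlub]].
  { exists ((b - a) * (Rabs (G 0) + LG * Lw)). intros x [h [Hh ->]].
    eapply Rle_trans; [apply Rle_abs |]. apply dq_integral_bound; auto.
    intros q Hq. apply lipschitz_bound; assumption. }
  { exists (dq_integral w a b G ((b - a) / 2)), ((b - a) / 2). split; auto. lra. }
  exists Sup. intros eps Heps.
  assert (Hh0 : exists h0, 0 < h0 < b - a /\ Sup - eps / 2 < dq_integral w a b G h0).
  { apply NNPP. intros Hn. assert (Sup <= Sup - eps / 2); [| lra].
    apply Hlub. intros x [h [Hh ->]]. apply Rnot_lt_le. intros Hlt. apply Hn. exists h. auto. }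
  destruct Hh0 as [h0 [Hh0 Hnear]].
  assert (HK := shift_const_nonneg h0 ltac:(lra)).
  set (K := shift_const h0) in *.
  set (eta := Rmin (eps / 2 / (K + 1)) ((b - a - h0) / 2)).
  pose proof (Rmin_l (eps / 2 / (K + 1)) ((b - a - h0) / 2)).
  pose proof (Rmin_r (eps / 2 / (K + 1)) ((b - a - h0) / 2)).
  assert (Heta : 0 < eta) by (apply Rmin_glb_lt; [apply Rdiv_lt_0_compat |]; lra).
  exists eta. split; auto. intros k Hk.
  assert (Hdec := dq_integral_almost_decreasing h0 k ltac:(lra) ltac:(lra) ltac:(unfold eta in *; lra)).
  fold K in Hdec.
  assert (K * k < eps / 2).
  { apply Rle_lt_trans with (K * (eps / 2 / (K + 1))); [apply Rmult_le_compat_l; unfold eta in *; lra |].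
    apply (Rmult_lt_reg_r (K + 1)); [lra |]. field_simplify; nra. }
  assert (dq_integral w a b G k <= Sup) by (apply Hub; exists k; split; auto; unfold eta in *; lra).
  apply Rabs_def1; lra.
Qed.

End ConvexIntegrands.

Definition dq_cauchy (G : R -> R) : Prop := continuity G /\ cauchy_right0 (dq_integral w a b G).

Lemma dq_cauchy_lin G1 G2 al be : dq_cauchy G1 -> dq_cauchy G2 ->
  dq_cauchy (fun q => al * G1 q + be * G2 q).
Proof.
  intros [C1 P1] [C2 P2]. split.
  - apply continuity_plus; apply continuity_scal; assumption.
  - apply (cauchy_right0_ext (fun h => al * dq_integral w a b G1 h + be * dq_integral w a b G2 h)).
    + intros h Hh. symmetry. apply dq_integral_lin; assumption.
    + apply cauchy_right0_lin; assumption.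
Qed.

Lemma dq_cauchy_ext G G' : (forall q, G q = G' q) -> dq_cauchy G -> dq_cauchy G'.
Proof.
  intros E [C P]. split.
  - intros x. apply (continuity_pt_ext G); auto.
  - apply (cauchy_right0_ext (dq_integral w a b G)); auto.
    intros h _. unfold dq_integral. apply RInt_ext. intros x _. apply E.
Qed.

Lemma dq_cauchy_abs c : dq_cauchy (fun q => Rabs (q - c)).
Proof.
  assert (Hc : continuity (fun q => Rabs (q - c))).
  { intros x. apply (continuity_pt_comp (fun q => q - c) Rabs); [| apply Rcontinuity_abs].
    apply derivable_continuous_pt. reg. }
  split; [exact Hc |].
  destruct (cv_dq_integral_convex (fun q => Rabs (q - c)) Hc) with (LG := 1) as [l Hl].
  - intros; apply Rabs_pos.
  - intros l p q Hl.
    replace (l * p + (1 - l) * q - c) with (l * (p - c) + (1 - l) * (q - c)) by ring.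
    eapply Rle_trans; [apply Rabs_triang |].
    rewrite !Rabs_mult, (Rabs_right l), (Rabs_right (1 - l)) by lra. lra.
  - intros p q. rewrite Rmult_1_l.
    eapply Rle_trans; [apply Rabs_triang_inv2 |]. right. f_equal. ring.
  - eapply cv_right0_cauchy; eauto.
Qed.

Lemma dq_cauchy_hat d c : 0 < d -> dq_cauchy (fun q => hat d (q - c)).
Proof.
  intros Hd.
  apply (dq_cauchy_ext (fun q => 1 * (/ (2 * d) * Rabs (q - (c - d)) + - 2 / (2 * d) * Rabs (q - c))
                                + / (2 * d) * Rabs (q - (c + d)))).
  - intros q. unfold hat.
    replace (q - (c - d)) with (q - c + d) by ring. replace (q - (c + d)) with (q - c - d) by ring.
    field. lra.
  - repeat apply dq_cauchy_lin; apply dq_cauchy_abs.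
Qed.

Lemma dq_cauchy_sum (f : nat -> R -> R) n : (forall j, dq_cauchy (f j)) ->
  dq_cauchy (fun q => sum_f_R0 (fun j => f j q) n).
Proof.
  intros Hf. induction n as [| n IH].
  - apply (dq_cauchy_ext (fun q => 1 * f O q + 0 * f O q)); [intros; simpl; ring |].
    apply dq_cauchy_lin; apply Hf.
  - apply (dq_cauchy_ext (fun q => 1 * sum_f_R0 (fun j => f j q) n + 1 * f (S n) q));
      [intros; simpl; ring |].
    apply dq_cauchy_lin; auto.
Qed.

Lemma dq_cauchy_approx G : continuity G ->
  (forall eps, 0 < eps -> exists G', dq_cauchy G' /\ forall q, Rabs q <= Lw -> Rabs (G q - G' q) <= eps) ->
  dq_cauchy G.
Proof.
  intros HG Happrox. split; [exact HG |]. intros eps Heps.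
  set (e := eps / (3 * (b - a) + 3)).
  assert (He : 0 < e) by (unfold e; apply Rdiv_lt_0_compat; lra).
  destruct (Happrox e He) as [G' [[C' P'] Hclose]].
  destruct (P' (eps / 3)) as [d [Hd Hd']]; [lra |].
  exists (Rmin d (b - a)). split; [apply Rmin_glb_lt; lra |].
  intros h k Hh Hk. pose proof (Rmin_l d (b - a)). pose proof (Rmin_r d (b - a)).
  assert (A1 := dq_integral_dist G G' h e HG C' ltac:(lra) Hclose).
  assert (A2 := dq_integral_dist G G' k e HG C' ltac:(lra) Hclose).
  assert (A3 : Rabs (dq_integral w a b G' h - dq_integral w a b G' k) < eps / 3) by (apply Hd'; lra).
  assert ((b - a) * e < eps / 3).
  { unfold e. apply (Rmult_lt_reg_r (3 * (b - a) + 3)); [lra |]. field_simplify; lra. }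
  apply Rabs_def2 in A3. apply Rabs_le_between in A1. apply Rabs_le_between in A2.
  apply Rabs_def1; lra.
Qed.

Lemma cv_dq_integral G : continuity G -> exists l, cv_right0 (dq_integral w a b G) l.
Proof.
  intros HG. apply cauchy_right0_cv.
  enough (H : dq_cauchy G) by (destruct H; assumption).
  apply dq_cauchy_approx; auto. intros eps Heps.
  destruct (hat_interpolation G (Lw + 1) eps HG ltac:(lra) Heps) as [d [n [Hd Hclose]]].
  exists (hat_interpolant G (Lw + 1) d n). split.
  - apply (dq_cauchy_sum (fun j q => G (-(Lw + 1) + INR j * d) * hat d (q - (-(Lw + 1) + INR j * d)))).
    intros j. apply (dq_cauchy_ext (fun q => G (-(Lw + 1) + INR j * d) * hat d (q - (-(Lw + 1) + INR j * d))
                                          + 0 * hat d (q - (-(Lw + 1) + INR j * d)))); [intros; ring |].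
    apply dq_cauchy_lin; apply dq_cauchy_hat; assumption.
  - intros q Hq. apply Hclose. apply Rabs_le_between in Hq. lra.
Qed.

Lemma dq_integral_id h : 0 < h < b - a ->
  Rabs (dq_integral w a b (fun q => q) h - (w b - w a)) <= 3 * Lw * h.
Proof.
  intros Hh.
  assert (Cw := lipschitz_continuity Lw w Hw).
  assert (Cs := continuity_shift w h Cw).
  assert (E : dq_integral w a b (fun q => q) h = / h * (RInt w (b - h) b - RInt w a (a + h))).
  { unfold dq_integral, dq.
    rewrite (RInt_ext (V := R_CompleteNormedModule) _ (fun x => / h * (w (x + h) - w x)));
      [| intros x _; cbn; field; lra].
    rewrite RInt_scal_cont by (apply continuity_minus; assumption). f_equal.
    rewrite RInt_minus_cont, RInt_shift_cont by assumption.
    replace (b - h + h) with b by ring.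
    pose proof (RInt_Chasles_cont w Cw a (a + h) b). pose proof (RInt_Chasles_cont w Cw a (b - h) b).
    lra. }
  assert (Hloc : forall x0 x, x0 <= x <= x0 + h -> Rabs (w x - w x0) <= Lw * h).
  { intros x0 x Hx. eapply Rle_trans; [apply Hw |].
    apply Rmult_le_compat_l; auto. rewrite Rabs_right; lra. }
  assert (P1 := RInt_rectangle_error w (b - h) h (Lw * h) Cw ltac:(lra) (Hloc (b - h))).
  assert (P2 := RInt_rectangle_error w a h (Lw * h) Cw ltac:(lra) (Hloc a)).
  assert (P3 := Hloc (b - h) b ltac:(lra)).
  replace (b - h + h) with b in P1 by ring.
  rewrite E.
  replace (/ h * (RInt w (b - h) b - RInt w a (a + h)) - (w b - w a)) with
    (/ h * ((RInt w (b - h) b - h * w (b - h)) - (RInt w a (a + h) - h * w a) - h * (w b - w (b - h))))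
    by (field; lra).
  rewrite Rabs_mult, Rabs_inv, (Rabs_right h) by lra.
  apply (Rmult_le_reg_l h); [lra |]. rewrite <- Rmult_assoc, Rinv_r, Rmult_1_l by lra.
  apply Rabs_le. apply Rabs_le_between in P1, P2, P3. split; nra.
Qed.

Lemma cv_dq_integral_id : cv_right0 (dq_integral w a b (fun q => q)) (w b - w a).
Proof.
  intros eps Heps. exists (Rmin (b - a) (eps / (3 * Lw + 1))). split.
  { apply Rmin_glb_lt; [lra | apply Rdiv_lt_0_compat; lra]. }
  intros h Hh. pose proof (Rmin_l (b - a) (eps / (3 * Lw + 1))).
  pose proof (Rmin_r (b - a) (eps / (3 * Lw + 1))).
  eapply Rle_lt_trans; [apply dq_integral_id; lra |].
  apply Rle_lt_trans with ((3 * Lw + 1) * h); [nra |].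
  apply (Rmult_lt_reg_r (/ (3 * Lw + 1))); [apply Rinv_0_lt_compat; lra |].
  replace ((3 * Lw + 1) * h * / (3 * Lw + 1)) with h by (field; lra). unfold Rdiv in *. lra.
Qed.

Lemma dq_limit_increment_bound phi c F t l e Dt D0 : continuity phi ->
  (forall q, Rabs q <= Lw -> Rabs (phi (c * (F + t * q)) - phi (c * F) - c * t * l * q) <= e) ->
  cv_right0 (dq_integral w a b (fun q => phi (c * (F + t * q)))) Dt ->
  cv_right0 (dq_integral w a b (fun q => phi (c * (F + 0 * q)))) D0 ->
  Rabs (Dt - D0 - c * t * l * (w b - w a)) <= (b - a) * e.
Proof.
  intros Hphi Hlin HDt HD0.
  assert (Hcont : forall s, continuity (fun q => phi (c * (F + s * q)))).
  { intros s x. apply (continuity_pt_comp (fun q => c * (F + s * q)) phi); [| apply Hphi].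
    apply derivable_continuous_pt. reg. }
  assert (Hid : continuity (fun q => q)) by (intros x; apply derivable_continuous_pt; reg).
  apply (cv_right0_abs_le
           (fun h => 1 * dq_integral w a b (fun q => phi (c * (F + t * q))) h
                     + -1 * (1 * dq_integral w a b (fun q => phi (c * (F + 0 * q))) h
                             + c * t * l * dq_integral w a b (fun q => q) h)) _ _ (b - a)).
  - lra.
  - replace (Dt - D0 - c * t * l * (w b - w a)) with (1 * Dt + -1 * (1 * D0 + c * t * l * (w b - w a)))
      by ring.
    apply cv_right0_lin; [exact HDt |]. apply cv_right0_lin; [exact HD0 | apply cv_dq_integral_id].
  - intros h Hh.
    rewrite <- (dq_integral_lin (fun q => phi (c * (F + 0 * q))) (fun q => q) 1 (c * t * l) h (Hcont 0) Hid) by lra.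
    replace (1 * dq_integral w a b (fun q => phi (c * (F + t * q))) h
             + -1 * dq_integral w a b (fun q => 1 * phi (c * (F + 0 * q)) + c * t * l * q) h)
      with (dq_integral w a b (fun q => phi (c * (F + t * q))) h
            - dq_integral w a b (fun q => 1 * phi (c * (F + 0 * q)) + c * t * l * q) h) by ring.
    apply dq_integral_dist; auto.
    + apply continuity_plus; [apply continuity_scal, Hcont | apply continuity_scal, Hid].
    + intros q Hq. replace (c * (F + 0 * q)) with (c * F) by ring.
      replace (phi (c * (F + t * q)) - (1 * phi (c * F) + c * t * l * q))
        with (phi (c * (F + t * q)) - phi (c * F) - c * t * l * q) by ring.
      apply Hlin, Hq.
Qed.

Lemma derivable_pt_lim_dq_limit phi l c F (D : R -> R) : continuity phi ->
  derivable_pt_lim phi (c * F) l -> 0 < c ->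
  (forall t, cv_right0 (dq_integral w a b (fun q => phi (c * (F + t * q)))) (D t)) ->
  derivable_pt_lim D 0 (c * l * (w b - w a)).
Proof.
  intros Hphi Hl Hc HD eps Heps.
  assert (HX : 0 <= (b - a) * c * Lw) by (apply Rmult_le_pos; nra).
  set (C := (b - a) * c * Lw + 1).
  assert (He : 0 < eps / (2 * C)) by (apply Rdiv_lt_0_compat; unfold C; lra).
  destruct (derivable_pt_lim_remainder phi (c * F) l _ Hl He) as [d1 [Hd1 Hrem]].
  assert (Hdel : 0 < d1 / (c * Lw + 1)) by (apply Rdiv_lt_0_compat; nra).
  exists (mkposreal _ Hdel). simpl. intros t Ht0 Ht. rewrite Rplus_0_l.
  assert (Htpos : 0 < Rabs t) by (apply Rabs_pos_lt; exact Ht0).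
  assert (Hsmall : c * Rabs t * Lw < d1).
  { apply (Rmult_lt_compat_r (c * Lw + 1)) in Ht; [| nra].
    unfold Rdiv in Ht. rewrite Rmult_assoc, Rinv_l, Rmult_1_r in Ht by nra. nra. }
  assert (Hlin : forall q, Rabs q <= Lw ->
    Rabs (phi (c * (F + t * q)) - phi (c * F) - c * t * l * q) <= eps / (2 * C) * (c * Rabs t * Lw)).
  { intros q Hq.
    assert (Hu : Rabs (c * t * q) <= c * Rabs t * Lw).
    { rewrite !Rabs_mult, (Rabs_right c) by lra. apply Rmult_le_compat_l; [nra | exact Hq]. }
    replace (c * (F + t * q)) with (c * F + c * t * q) by ring.
    replace (c * t * l * q) with (l * (c * t * q)) by ring.
    eapply Rle_trans; [apply Hrem; lra |]. apply Rmult_le_compat_l; lra. }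
  assert (Hb := dq_limit_increment_bound phi c F t l _ (D t) (D 0) Hphi Hlin (HD t) (HD 0)).
  replace ((D t - D 0) / t - c * l * (w b - w a)) with ((D t - D 0 - c * t * l * (w b - w a)) / t)
    by (field; auto).
  unfold Rdiv. rewrite Rabs_mult, Rabs_inv.
  apply (Rmult_lt_reg_r (Rabs t)); [exact Htpos |].
  rewrite Rmult_assoc, Rinv_l, Rmult_1_r by lra.
  eapply Rle_lt_trans; [exact Hb |].
  replace ((b - a) * (eps / (2 * C) * (c * Rabs t * Lw))) with (eps * Rabs t * ((b - a) * c * Lw / (2 * C)))
    by (field; unfold C; lra).
  assert ((b - a) * c * Lw / (2 * C) < 1).
  { apply (Rmult_lt_reg_r (2 * C)); [unfold C; lra |].
    unfold Rdiv. rewrite Rmult_assoc, Rinv_l, Rmult_1_r by (unfold C; lra). unfold C. lra. }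
  assert (0 < eps * Rabs t) by (apply Rmult_lt_0_compat; lra).
  nra.
Qed.

End DifferenceQuotients.

(** * First variation of the energy *)

Definition clamp (a b x : R) : R := Rmax a (Rmin b x).

Lemma clamp_in a b x : a <= b -> a <= clamp a b x <= b.
Proof. intros. unfold clamp, Rmax, Rmin. repeat destruct Rle_dec; lra. Qed.

Lemma clamp_id a b x : a <= x <= b -> clamp a b x = x.
Proof. intros. unfold clamp, Rmax, Rmin. repeat destruct Rle_dec; lra. Qed.

Lemma clamp_lipschitz a b : a <= b -> lipschitz 1 (clamp a b).
Proof.
  intros Hab x z. rewrite Rmult_1_l.
  unfold clamp, Rmax, Rmin. repeat destruct Rle_dec; unfold Rabs; repeat destruct Rcase_abs; lra.
Qed.

(* [v] is only Lipschitz on [a, b]; composing with [clamp a b] extends it to a globally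
   Lipschitz function without changing the integrals over [a, b]. *)
Lemma derivable_pt_lim_deriv_int phi l v Lv a b F c :
  continuity phi -> derivable_pt_lim phi (c * F) l -> 0 < c -> a < b ->
  (forall x z, a <= x <= b -> a <= z <= b -> Rabs (v x - v z) <= Lv * Rabs (x - z)) ->
  derivable_pt_lim (fun t => deriv_int (fun s => phi (c * s)) (fun x => F * x + t * v x) a b) 0
    (c * l * (v b - v a)).
Proof.
  intros Hphi Hl Hc Hab Hv.
  set (w := fun x => v (clamp a b x)).
  assert (Hw : lipschitz (Rabs Lv) w).
  { intros x z. unfold w. eapply Rle_trans; [apply Hv; apply clamp_in; lra |].
    eapply Rle_trans; [apply Rmult_le_compat_r; [apply Rabs_pos | apply Rle_abs] |].
    apply Rmult_le_compat_l; [apply Rabs_pos |].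
    pose proof (clamp_lipschitz a b ltac:(lra) x z). lra. }
  assert (Hwa : w a = v a) by (unfold w; rewrite clamp_id; auto; lra).
  assert (Hwb : w b = v b) by (unfold w; rewrite clamp_id; auto; lra).
  rewrite <- Hwa, <- Hwb.
  apply (derivable_pt_lim_dq_limit w (Rabs Lv) Hw a b Hab phi l c F); auto.
  intros t.
  assert (Hcont : continuity (fun q => phi (c * (F + t * q)))).
  { intros x. apply (continuity_pt_comp (fun q => c * (F + t * q)) phi); [| apply Hphi].
    apply derivable_continuous_pt. reg. }
  destruct (cv_dq_integral w (Rabs Lv) Hw a b Hab _ Hcont) as [L HL].
  assert (HI : IsDerivInt (fun s => phi (c * s)) (fun x => F * x + t * v x) a b L).
  { apply (IsDerivInt_cv_right0 _ _ (fun x => F * x + t * w x)); auto.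
    - intros x Hx. unfold w. rewrite clamp_id; auto.
    - intros x. apply (continuity_pt_comp (fun s => c * s) phi); [| apply Hphi].
      apply derivable_continuous_pt. reg.
    - apply continuity_plus; [intros x; apply derivable_continuous_pt; reg |].
      apply continuity_scal, (lipschitz_continuity (Rabs Lv)), Hw.
    - eapply cv_right0_ext; [| exact HL]. intros h Hh. unfold dq_integral.
      apply RInt_ext. intros x _. unfold dq. f_equal. field. lra. }
  rewrite (deriv_int_eq _ _ _ _ _ HI). exact HL.
Qed.

Lemma derivable_pt_lim_affine_comp f x0 l beta : derivable_pt_lim f x0 l ->
  derivable_pt_lim (fun t => f (x0 + t * beta)) 0 (l * beta).
Proof.
  intros Hf.
  assert (Haff : derivable_pt_lim (fun t => x0 + t * beta) 0 beta).
  { intros eps Heps. exists (mkposreal 1 Rlt_0_1). intros h Hh _.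
    replace ((x0 + (0 + h) * beta - (x0 + 0 * beta)) / h - beta) with 0 by (field; auto).
    rewrite Rabs_R0. exact Heps. }
  apply (derivable_pt_lim_comp (fun t => x0 + t * beta) f 0 beta l Haff).
  replace (x0 + 0 * beta) with x0 by ring. exact Hf.
Qed.

Lemma IZR_add_of_nat_sub i r : IZR (i + Z.of_nat r) - IZR i = INR r.
Proof. rewrite plus_IZR, INR_IZR_INZ. ring. Qed.

Lemma derivable_pt_lim_e_bond phi l v F i r : derivable_pt_lim phi (INR r * F) l ->
  derivable_pt_lim (fun t => e_bond phi (fun x => F * x + t * v x) i r) 0
    (l * (v (IZR (i + Z.of_nat r)) - v (IZR i))).
Proof.
  intros Hl. apply (derivable_pt_lim_ext (fun t => phi (INR r * F + t * (v (IZR (i + Z.of_nat r)) - v (IZR i))))).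
  - intros t. unfold e_bond. f_equal. rewrite <- (IZR_add_of_nat_sub i r). ring.
  - apply derivable_pt_lim_affine_comp, Hl.
Qed.

Lemma derivable_pt_lim_c_bond phi dphi v F N i r : (forall x, derivable_pt_lim phi x (dphi x)) ->
  lip_on 0 (INR N) v -> (1 <= r)%nat -> bond_in_c N i r = true ->
  derivable_pt_lim (fun t => c_bond phi (fun x => F * x + t * v x) i r) 0
    (dphi (INR r * F) * (v (IZR (i + Z.of_nat r)) - v (IZR i))).
Proof.
  intros Hphi [L HL] Hr Hb. unfold bond_in_c in Hb. apply andb_prop in Hb. destruct Hb as [H0i HiN].
  apply Z.leb_le in H0i. apply Z.leb_le in HiN.
  assert (Hr0 : 0 < INR r) by (apply lt_0_INR; lia).
  assert (0 <= IZR i) by (apply IZR_le; lia).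
  assert (IZR (i + Z.of_nat r) <= INR N) by (rewrite INR_IZR_INZ; apply IZR_le; lia).
  pose proof (IZR_add_of_nat_sub i r).
  replace (dphi (INR r * F) * (v (IZR (i + Z.of_nat r)) - v (IZR i)))
    with (/ INR r * (INR r * dphi (INR r * F) * (v (IZR (i + Z.of_nat r)) - v (IZR i)))) by (field; lra).
  apply (derivable_pt_lim_ext (mult_real_fct (/ INR r)
           (fun t => deriv_int (fun s => phi (INR r * s)) (fun x => F * x + t * v x) (IZR i) (IZR (i + Z.of_nat r)))));
    [intros; reflexivity |].
  apply derivable_pt_lim_scal, (derivable_pt_lim_deriv_int phi _ v L); auto; [| lra |].
  - intros x. apply derivable_continuous_pt. exists (dphi x). apply Hphi.
  - intros x z Hx Hz. apply HL; lra.
Qed.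

Lemma Rlist_sum_app l1 l2 : Rlist_sum (l1 ++ l2) = Rlist_sum l1 + Rlist_sum l2.
Proof. induction l1 as [| x l1 IH]; simpl; [ring | rewrite IH; ring]. Qed.

Lemma Rlist_sum_map_zero {A} (f : A -> R) l : (forall x, In x l -> f x = 0) -> Rlist_sum (map f l) = 0.
Proof. induction l as [| x l IH]; simpl; intros H; auto. rewrite H, IH; auto. ring. Qed.

Lemma Rlist_sum_map_ext {A} (f g : A -> R) l : (forall x, In x l -> f x = g x) ->
  Rlist_sum (map f l) = Rlist_sum (map g l).
Proof. induction l as [| x l IH]; simpl; intros H; auto. rewrite H, IH; auto. Qed.

Lemma Rlist_sum_map_plus {A} (f g : A -> R) l :
  Rlist_sum (map (fun x => f x + g x) l) = Rlist_sum (map f l) + Rlist_sum (map g l).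
Proof. induction l as [| x l IH]; simpl; [ring | rewrite IH; ring]. Qed.

Lemma Rlist_sum_map_scal {A} (f : A -> R) c l :
  Rlist_sum (map (fun x => c * f x) l) = c * Rlist_sum (map f l).
Proof. induction l as [| x l IH]; simpl; [ring | rewrite IH; ring]. Qed.

Lemma Rlist_sum_map_swap {A B} (f : A -> B -> R) l1 l2 :
  Rlist_sum (map (fun i => Rlist_sum (map (fun r => f i r) l2)) l1) =
  Rlist_sum (map (fun r => Rlist_sum (map (fun i => f i r) l1)) l2).
Proof.
  induction l1 as [| x l1 IH]; simpl.
  - symmetry. apply Rlist_sum_map_zero. auto.
  - rewrite IH, <- Rlist_sum_map_plus. reflexivity.
Qed.

Lemma Rlist_sum_seq_shift (U : nat -> R) m r n :
  Rlist_sum (map U (seq (m + r) n)) = Rlist_sum (map (fun k => U (k + r)%nat) (seq m n)).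
Proof.
  revert m. induction n as [| n IH]; intros m; simpl; [reflexivity |].
  rewrite <- IH. replace (S (m + r)) with (S m + r)%nat by lia. reflexivity.
Qed.

Lemma Rlist_sum_shift_diff (U : nat -> R) c L r : (r <= L)%nat ->
  (forall k, (k < r)%nat -> U k = 0) -> (forall k, (L - r <= k < L)%nat -> U k = 0) ->
  Rlist_sum (map (fun k => if (k + r <? L)%nat then c * (U (k + r)%nat - U k) else 0) (seq 0 L)) = 0.
Proof.
  intros HrL Hlo Hhi.
  assert (Hzero : forall m n, (forall k, (m <= k < m + n)%nat -> U k = 0) -> Rlist_sum (map U (seq m n)) = 0)
    by (intros m n H; apply Rlist_sum_map_zero; intros k Hk; apply in_seq in Hk; apply H; lia).
  assert (Hsplit : Rlist_sum (map U (seq 0 r)) + Rlist_sum (map U (seq r (L - r)))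
                   = Rlist_sum (map U (seq 0 (L - r))) + Rlist_sum (map U (seq (L - r) r))).
  { rewrite <- !Rlist_sum_app, <- !map_app, <- !seq_app. f_equal. f_equal. f_equal. lia. }
  rewrite Hzero, (Hzero (L - r)%nat) in Hsplit by (intros k Hk; first [apply Hlo; lia | apply Hhi; lia]).
  replace (seq 0 L) with (seq 0 ((L - r) + r)) by (f_equal; lia).
  rewrite seq_app, map_app, Rlist_sum_app, (Rlist_sum_map_zero _ (seq (0 + (L - r)) r)).
  2:{ intros k Hk. apply in_seq in Hk. destruct (Nat.ltb_spec (k + r) L); [lia | reflexivity]. }
  rewrite (Rlist_sum_map_ext _ (fun k => c * (U (k + r)%nat + -1 * U k))).
  2:{ intros k Hk. apply in_seq in Hk. destruct (Nat.ltb_spec (k + r) L); [ring | lia]. }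
  rewrite Rlist_sum_map_scal, Rlist_sum_map_plus, Rlist_sum_map_scal.
  rewrite <- (Rlist_sum_seq_shift U 0 r). simpl (0 + r)%nat. 
  replace (Rlist_sum (map U (seq r (L - r)))) with (Rlist_sum (map U (seq 0 (L - r)))) by lra. ring.
Qed.

Lemma derivable_pt_lim_Rlist_sum {A} (f : R -> A -> R) f' x0 l :
  (forall x, In x l -> derivable_pt_lim (fun t => f t x) x0 (f' x)) ->
  derivable_pt_lim (fun t => Rlist_sum (map (f t) l)) x0 (Rlist_sum (map f' l)).
Proof.
  induction l as [| x l IH]; intros H; simpl.
  - apply derivable_pt_lim_const.
  - apply (derivable_pt_lim_plus (fun t => f t x) (fun t => Rlist_sum (map (f t) l))).
    + apply H. left. reflexivity.
    + apply IH. intros y Hy. apply H. right. exact Hy.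
Qed.

Definition E_ecc_variation (dphi : R -> R) (N Rc : nat) (F : R) (v : R -> R) : R :=
  let M := (Z.of_nat N + Z.of_nat Rc)%Z in
  Rlist_sum (map (fun i =>
    Rlist_sum (map (fun r =>
      if (i + Z.of_nat r <? M)%Z then dphi (INR r * F) * (v (IZR (i + Z.of_nat r)) - v (IZR i))
      else 0) (seq 1 Rc))) (Zrange (- M + 1) M)).

Lemma derivable_pt_lim_E_ecc phi dphi N Rc F v : (forall x, derivable_pt_lim phi x (dphi x)) ->
  lip_on 0 (INR N) v ->
  derivable_pt_lim (fun t => E_ecc phi N Rc (fun x => F * x + t * v x)) 0 (E_ecc_variation dphi N Rc F v).
Proof.
  intros Hphi Hv. unfold E_ecc, E_ecc_variation.
  apply derivable_pt_lim_Rlist_sum. intros i _.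
  apply derivable_pt_lim_Rlist_sum. intros r Hr. apply in_seq in Hr.
  destruct (i + Z.of_nat r <? Z.of_nat N + Z.of_nat Rc)%Z; [| apply derivable_pt_lim_const].
  destruct (bond_in_c N i r) eqn:Hb.
  - apply (derivable_pt_lim_c_bond phi dphi v F N); auto. lia.
  - apply derivable_pt_lim_e_bond, Hphi.
Qed.

Lemma E_ecc_variation_eq_0 dphi N Rc F v : (forall i, in_ID N Rc i -> v (IZR i) = 0) ->
  E_ecc_variation dphi N Rc F v = 0.
Proof.
  intros HD. unfold E_ecc_variation.
  set (M := (Z.of_nat N + Z.of_nat Rc)%Z).
  rewrite Rlist_sum_map_swap. apply Rlist_sum_map_zero. intros r Hr. apply in_seq in Hr.
  unfold Zrange. rewrite map_map.
  set (lo := (- M + 1)%Z). set (L := Z.to_nat (M - lo)).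
  set (U := fun k : nat => v (IZR (lo + Z.of_nat k))).
  rewrite (Rlist_sum_map_ext _ (fun k => if (k + r <? L)%nat then dphi (INR r * F) * (U (k + r)%nat - U k) else 0)).
  - apply Rlist_sum_shift_diff.
    + unfold L, lo, M. lia.
    + intros k Hk. apply HD. unfold in_ID, lo, M. lia.
    + intros k Hk. apply HD. unfold in_ID, L, lo, M in *. lia.
  - intros k _. unfold U.
    destruct (Z.ltb_spec (lo + Z.of_nat k + Z.of_nat r) M); destruct (Nat.ltb_spec (k + r) L);
      try (exfalso; unfold L, lo, M in *; lia); [| reflexivity].
    rewrite Nat2Z.inj_add, Z.add_assoc. reflexivity.
Qed.

Theorem proposition3p2 (N Rc : nat) (phi dphi : R -> R) (F : R) (v : R -> R) :
  (1 <= N)%nat -> (1 <= Rc)%nat ->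
  (forall x, derivable_pt_lim phi x (dphi x)) -> continuity dphi ->
  0 < F -> in_U0 N Rc v ->
  derivable_pt_lim (fun t => E_ecc phi N Rc (fun x => F * x + t * v x)) 0 0.
Proof.
  intros _ _ Hphi _ _ [Hv HD].
  pose proof (derivable_pt_lim_E_ecc phi dphi N Rc F v Hphi Hv) as Hvar.
  rewrite E_ecc_variation_eq_0 in Hvar by exact HD.
  exact Hvar.
Qed.
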